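(* Let $V$ be a nonempty set and $T:V\to V$. Then $T$ has a Drazin inverse if and only if there exists an integer $k\ge0$ such that $S:=T|_{T^k(V)}:T^k(V)\to T^k(V)$ is a bijection. If this holds, the Drazin inverse of $T$ is $S^{-(k+1)}\circ T^k$.
   Context: $T^0$ is the identity and $T^i=T\circ T^{i-1}$. A Drazin inverse of $T:V\to V$ is a map $G:V\to V$ such that, for some integer $k\ge1$, $T^k\circ G\circ T=T^k$, and also $G\circ T\circ G=G$ and $T\circ G=G\circ T$. (It is unique when it exists.) *)

Fixpoint fpow {V : Type} (T : V -> V) (i : nat) : V -> V :=
  match i with
  | O => fun x => x
  | S j => fun x => T (fpow T j x)
  end.

Lemma fpow_S_r {V : Type} (T : V -> V) (k : nat) (x : V) :
  fpow T (S k) x = fpow T k (T x).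
Proof. induction k as [|k IH]; simpl; [reflexivity|]. simpl in IH. now rewrite IH. Qed.

Definition is_drazin {V : Type} (T G : V -> V) : Prop :=
  exists k : nat, 1 <= k /\
    (forall x, fpow T k (G (T x)) = fpow T k x) /\
    (forall x, G (T (G x)) = G x) /\
    (forall x, T (G x) = G (T x)).

Definition imk {V : Type} (T : V -> V) (k : nat) : Type :=
  { y : V | exists x : V, y = fpow T k x }.

Lemma imk_stable {V : Type} (T : V -> V) (k : nat) (y : V) :
  (exists x, y = fpow T k x) -> exists x, T y = fpow T k x.
Proof. intros [x ->]. exists (T x). now rewrite <- fpow_S_r. Qed.

Definition restr {V : Type} (T : V -> V) (k : nat) (y : imk T k) : imk T k :=
  exist _ (T (proj1_sig y)) (@imk_stable V T k (proj1_sig y) (proj2_sig y)).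

Definition toimk {V : Type} (T : V -> V) (k : nat) (x : V) : imk T k :=
  exist _ (fpow T k x) (ex_intro _ x eq_refl).

Definition bij {A : Type} (f : A -> A) : Prop :=
  (forall a b, f a = f b -> a = b) /\ (forall b, exists a, f a = b).
Arguments restr {V} T k y.
Arguments toimk {V} T k x.

(* If [G] is a Drazin inverse with index [k], then [T^k G T = T^k] together with
   [TG = GT] says exactly that [T] restricted to [T^k(V)] has the inverse
   [T^k x |-> T^k (G x)], so the restriction is a bijection.  Conversely, if
   [S := T|T^k(V)] has an inverse [S^-1], then [S^-(k+1) o T^k] is a Drazin
   inverse of index [k+1].  For uniqueness, a Drazin inverse [G] satisfies
   [G = T G G], so [G x] lies in every [T^n(V)]; and [T^k T G x = T^k x] follows
   from [T^k' T G x = T^k' x] by applying [T^k] and cancelling the injective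
   [S^k'], where [k'] is the index of [G].  Hence
   [S^(k+1) (G x) = T^k x], i.e. [G x = S^-(k+1) (T^k x)]. *)

From Stdlib Require Import ProofIrrelevance ClassicalEpsilon PeanoNat.

Lemma fpow_inv {A : Type} (f g : A -> A) (gK : forall a, g (f a) = a) n a :
  fpow g n (fpow f n a) = a.
Proof.
  induction n as [|n IH]; [reflexivity|].
  change (fpow g (S n) (f (fpow f n a)) = a).
  now rewrite fpow_S_r, gK.
Qed.

Lemma fpow_inj {A : Type} (f g : A -> A) (gK : forall a, g (f a) = a) n a b :
  fpow f n a = fpow f n b -> a = b.
Proof.
  intro Hab.
  now rewrite <- (fpow_inv f g gK n a), <- (fpow_inv f g gK n b), Hab.
Qed.

Lemma bij_inverse {A : Type} (f : A -> A) :
  bij f -> exists g : A -> A, (forall a, g (f a) = a) /\ (forall a, f (g a) = a).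
Proof.
  intros [f_inj f_surj].
  exists (fun b => proj1_sig (constructive_indefinite_description _ (f_surj b))).
  assert (fK : forall b,
    f (proj1_sig (constructive_indefinite_description _ (f_surj b))) = b).
  { intro b. now destruct constructive_indefinite_description. }
  split; [intro a; apply f_inj|]; apply fK.
Qed.

Section Iterates.
Context {V : Type} (T : V -> V).

Lemma fpowD a b x : fpow T (a + b) x = fpow T a (fpow T b x).
Proof. induction a; simpl; congruence. Qed.

Lemma fpowC a b x : fpow T a (fpow T b x) = fpow T b (fpow T a x).
Proof. now rewrite <- !fpowD, Nat.add_comm. Qed.

Lemma fpow_commute (G : V -> V) (TG : forall x, T (G x) = G (T x)) n x :
  G (fpow T n x) = fpow T n (G x).
Proof. induction n as [|n IH]; simpl; [reflexivity|]. now rewrite <- TG, IH. Qed.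

Lemma imk_val_inj k (a b : imk T k) : proj1_sig a = proj1_sig b -> a = b.
Proof.
  destruct a as [a pa], b as [b pb]; simpl; intros ->.
  f_equal; apply proof_irrelevance.
Qed.

Lemma val_fpow_restr k n (y : imk T k) :
  proj1_sig (fpow (restr T k) n y) = fpow T n (proj1_sig y).
Proof. induction n as [|n IH]; simpl; congruence. Qed.

Lemma toimk_val k (y : imk T k) : toimk T k (proj1_sig y) = fpow (restr T k) k y.
Proof. apply imk_val_inj; simpl. now rewrite val_fpow_restr. Qed.

Lemma toimk_T k x : toimk T k (T x) = restr T k (toimk T k x).
Proof. apply imk_val_inj; simpl. now rewrite <- fpow_S_r. Qed.

Lemma toimk_fpow k n x : toimk T k (fpow T n x) = fpow (restr T k) n (toimk T k x).
Proof.
  apply imk_val_inj. rewrite val_fpow_restr; simpl. apply fpowC.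
Qed.

Lemma drazin_range (G : V -> V) :
  (forall x, G (T (G x)) = G x) -> (forall x, T (G x) = G (T x)) ->
  forall n x, exists y, G x = fpow T n y.
Proof.
  intros drazinG drazinC.
  assert (GTGG : forall z, G z = T (G (G z))).
  { intro z. now rewrite drazinC, drazinG. }
  intro n; induction n as [|n IH]; intro x; [now exists (G x)|].
  destruct (IH (G x)) as [y Hy].
  exists y. now rewrite GTGG, Hy.
Qed.

End Iterates.

Section DrazinToBijection.
Context {V : Type} (T G : V -> V) (k : nat).
Hypothesis drazinK : forall x, fpow T k (G (T x)) = fpow T k x.
Hypothesis drazinC : forall x, T (G x) = G (T x).

Lemma restr_inj_drazin : forall a b, restr T k a = restr T k b -> a = b.
Proof.
  assert (GTK : forall u, G (T (fpow T k u)) = fpow T k u).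
  { intro u. change (G (fpow T (S k) u) = fpow T k u).
    now rewrite fpow_commute, fpow_S_r, drazinC, drazinK by exact drazinC. }
  intros [a [u ->]] [b [v ->]] Hab.
  apply (f_equal (@proj1_sig _ _)) in Hab; simpl in Hab.
  apply imk_val_inj; simpl.
  now rewrite <- (GTK u), <- (GTK v), Hab.
Qed.

Lemma restr_surj_drazin : forall b, exists a, restr T k a = b.
Proof.
  intros [b [x ->]]. exists (toimk T k (G x)).
  apply imk_val_inj; simpl.
  change (fpow T (S k) (G x) = fpow T k x).
  now rewrite fpow_S_r, drazinC.
Qed.

Lemma restr_bij_drazin : bij (restr T k).
Proof. split; [exact restr_inj_drazin | exact restr_surj_drazin]. Qed.

End DrazinToBijection.

Section InverseOfRestriction.
Context {V : Type} (T : V -> V) (k : nat) (Sinv : imk T k -> imk T k).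
Hypothesis SinvK : forall y, Sinv (restr T k y) = y.
Hypothesis restrK : forall y, restr T k (Sinv y) = y.

Definition drazin_of_inverse (x : V) : V :=
  proj1_sig (fpow Sinv (S k) (toimk T k x)).

Lemma drazin_of_inverse_val (y : imk T k) :
  drazin_of_inverse (proj1_sig y) = proj1_sig (Sinv y).
Proof.
  unfold drazin_of_inverse. rewrite toimk_val; simpl.
  now rewrite fpow_inv.
Qed.

Lemma T_drazin_of_inverse x :
  T (drazin_of_inverse x) = proj1_sig (fpow Sinv k (toimk T k x)).
Proof.
  unfold drazin_of_inverse; simpl.
  change (T (proj1_sig ?y)) with (proj1_sig (restr T k y)).
  now rewrite restrK.
Qed.

Lemma drazin_of_inverse_T x :
  drazin_of_inverse (T x) = proj1_sig (fpow Sinv k (toimk T k x)).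
Proof.
  unfold drazin_of_inverse. now rewrite toimk_T, fpow_S_r, SinvK.
Qed.

Lemma is_drazin_of_inverse : is_drazin T drazin_of_inverse.
Proof.
  exists (S k); repeat split.
  - apply le_n_S, Nat.le_0_l.
  - intro x. rewrite drazin_of_inverse_T, <- val_fpow_restr; simpl.
    now rewrite fpow_inv.
  - intro x. now rewrite T_drazin_of_inverse, drazin_of_inverse_val.
  - intro x. now rewrite T_drazin_of_inverse, drazin_of_inverse_T.
Qed.

Lemma drazin_unique G : is_drazin T G -> forall x, G x = drazin_of_inverse x.
Proof.
  intros [k' [_ [drazinK [drazinG drazinC]]]] x.
  destruct (drazin_range T G drazinG drazinC k x) as [y Gx].
  set (a := exist (fun z => exists u, z = fpow T k u) (G x) (ex_intro _ y Gx)).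
  change (G x) with (proj1_sig a).
  assert (TGx : toimk T k (T (G x)) = toimk T k x).
  { apply (fpow_inj (restr T k) Sinv SinvK k').
    now rewrite <- !toimk_fpow, drazinC, drazinK. }
  rewrite <- (fpow_inv (restr T k) Sinv SinvK (S k) a).
  unfold drazin_of_inverse. f_equal. f_equal.
  apply imk_val_inj. rewrite val_fpow_restr, fpow_S_r.
  exact (f_equal (@proj1_sig _ _) TGx).
Qed.

End InverseOfRestriction.

Theorem mainTheorem19 (V : Type) (HV : inhabited V) (T : V -> V) :
  ((exists G : V -> V, is_drazin T G) <-> (exists k : nat, bij (restr T k))) /\
  (forall k : nat, bij (restr T k) ->
   forall Sinv : imk T k -> imk T k,
     (forall y, Sinv (restr T k y) = y) ->
     (forall y, restr T k (Sinv y) = y) ->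
     is_drazin T (fun x => proj1_sig (fpow Sinv (S k) (toimk T k x))) /\
     (forall G : V -> V, is_drazin T G ->
        forall x, G x = proj1_sig (fpow Sinv (S k) (toimk T k x)))).
Proof.
  split; [split|].
  - intros [G [k [_ [drazinK [_ drazinC]]]]].
    exists k. exact (restr_bij_drazin T G k drazinK drazinC).
  - intros [k Sbij].
    destruct (bij_inverse _ Sbij) as [Sinv [SinvK restrK]].
    eexists. exact (is_drazin_of_inverse T k Sinv SinvK restrK).
  - intros k _ Sinv SinvK restrK. split.
    + exact (is_drazin_of_inverse T k Sinv SinvK restrK).
    + exact (drazin_unique T k Sinv SinvK).
Qed.
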